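(* For all integers $n\geq 2$, \[g(n+1)<f(n)+\frac{1000}{\mu(n-1)^5}.\]
   Context: Let $\mu(m)=\pi\sqrt{m}$. For an integer $n\geq 2$ put $x=\mu(n-1)$, $y=\mu(n)$, $z=\mu(n+1)$, and define \[f(n)=e^{x-2y+z}\,\frac{y^{14}(x^5-x^4-1)(z^5-z^4-1)}{x^7z^7(y^5-y^4+1)^2},\qquad g(n)=e^{x-2y+z}\,\frac{y^{14}(x^5-x^4+1)(z^5-z^4+1)}{x^7z^7(y^5-y^4-1)^2}.\] Thus, with $w=\mu(n+2)$, $g(n+1)=e^{y-2z+w}\dfrac{z^{14}(y^5-y^4+1)(w^5-w^4+1)}{y^7w^7(z^5-z^4-1)^2}$. *)

From Stdlib Require Import Reals.
Open Scope R_scope.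

Definition mu (m : nat) : R := PI * sqrt (INR m).

Definition f_n (n : nat) : R :=
  let x := mu (n - 1) in let y := mu n in let z := mu (n + 1) in
  exp (x - 2 * y + z) *
  (y ^ 14 * (x ^ 5 - x ^ 4 - 1) * (z ^ 5 - z ^ 4 - 1)) /
  (x ^ 7 * z ^ 7 * (y ^ 5 - y ^ 4 + 1) ^ 2).

Definition g_n (n : nat) : R :=
  let x := mu (n - 1) in let y := mu n in let z := mu (n + 1) in
  exp (x - 2 * y + z) *
  (y ^ 14 * (x ^ 5 - x ^ 4 + 1) * (z ^ 5 - z ^ 4 + 1)) /
  (x ^ 7 * z ^ 7 * (y ^ 5 - y ^ 4 - 1) ^ 2).

(* With t = PI sqrt m and amp t = e^t (t - 1) / t^3, the factorisation
   t^5 - t^4 -+ 1 = t^4 (t - 1) (1 -+ eps t), eps t = 1 / (t^4 (t - 1)) = O(t^-5), gives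
   f(n) = A F and g(n+1) = B G, where A and B are the exponentials of the second
   differences of Phi m = ln (amp (PI sqrt m)) at m = n - 1 and m = n, and F, G = 1 + O(t^-5).
   Phi is concave, so A <= 1; and Phi''' <= K := 3 PI / (8 m^(5/2)) = O(t^-5), so B <= e^K A.
   Hence g(n+1) - f(n) <= e^K G - F = O(mu(n-1)^-5); the bounds 3 < PI < 16/5 keep the
   constant below 1000. *)

From Stdlib Require Import Reals Lra Psatz Factorial.
From Coquelicot Require Import Coquelicot.
Open Scope R_scope.

Lemma PI_gt_3 : 3 < PI.
Proof. generalize PI2_3_2; lra. Qed.

Lemma INR_fact_S n : INR (fact (S n)) = INR (S n) * INR (fact n).
Proof. rewrite fact_simpl, mult_INR; reflexivity. Qed.

(* If PI/2 >= 8/5 then cos (8/5) >= 0, but its degree-8 Taylor bound is negative. *)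
Lemma PI_lt_16_5 : PI < 16 / 5.
Proof.
  apply Rnot_le_lt; intros Hle.
  assert (Hcos := cos_ge_0 (8 / 5) ltac:(lra) ltac:(lra)).
  destruct (cos_bound (8 / 5) 1) as [_ Hub]; [lra | lra |].
  unfold cos_approx, cos_term in Hub; cbn [sum_f_R0 Nat.mul Nat.add] in Hub.
  rewrite !INR_fact_S in Hub; cbn [fact] in Hub; rewrite !S_INR in Hub; simpl INR in Hub.
  cbn [pow] in Hub; lra.
Qed.

Lemma exp_monotone a b : a <= b -> exp a <= exp b.
Proof. intros [Hlt | ->]; [left; now apply exp_increasing | apply Rle_refl]. Qed.

Lemma exp_INR_mul n t : exp (INR n * t) = exp t ^ n.
Proof.
  induction n as [| n IH]; [simpl; rewrite Rmult_0_l, exp_0; ring |].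
  rewrite S_INR, Rmult_plus_distr_r, Rmult_1_l, exp_plus, IH; simpl; ring.
Qed.

Lemma exp_second_difference a b c : exp (a - 2 * b + c) = exp a * exp c / exp b ^ 2.
Proof.
  replace (a - 2 * b + c) with (a + c + - (INR 2 * b)) by (simpl; ring).
  rewrite !exp_plus, exp_Ropp, exp_INR_mul; field; apply Rgt_not_eq, exp_pos.
Qed.

Lemma exp_le_chord K M : 0 <= K <= M -> 0 < M -> exp K <= 1 + K * (exp M - 1) / M.
Proof.
  (* Weight the tangent-line bounds of exp at K, evaluated at M and at 0, by K and M - K. *)
  intros HK HM.
  assert (T1 := exp_ineq1_le (M - K)); assert (T2 := exp_ineq1_le (- K)).
  assert (HeK := exp_pos K).
  replace (exp (M - K)) with (exp M / exp K) in T1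
    by (unfold Rminus; rewrite exp_plus, exp_Ropp; field; lra).
  rewrite exp_Ropp in T2.
  assert (exp K * (1 + (M - K)) <= exp M).
  { apply (Rmult_le_compat_l (exp K)) in T1; [| lra].
    replace (exp K * (exp M / exp K)) with (exp M) in T1 by (field; lra). exact T1. }
  assert (exp K * (1 + - K) <= 1).
  { apply (Rmult_le_compat_l (exp K)) in T2; [| lra].
    rewrite Rinv_r in T2 by lra. exact T2. }
  apply (Rmult_le_reg_r M); [exact HM |].
  replace ((1 + K * (exp M - 1) / M) * M) with (M + K * (exp M - 1)) by (field; lra).
  nra.
Qed.

Lemma exp_6_5_le : exp (6 / 5) <= 7 / 2.
Proof.
  assert (Hsmall : exp (3 / 40) <= 40 / 37).
  { assert (T := exp_ineq1_le (- (3 / 40))); rewrite exp_Ropp in T.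
    assert (H0 := exp_pos (3 / 40)).
    apply (Rmult_le_compat_l (exp (3 / 40))) in T; [| lra].
    rewrite Rinv_r in T by lra. lra. }
  replace (6 / 5) with (INR 16 * (3 / 40)) by (simpl; lra).
  rewrite exp_INR_mul.
  assert (exp (3 / 40) ^ 16 <= (40 / 37) ^ 16)
    by (apply pow_incr; split; [left; apply exp_pos | exact Hsmall]).
  lra.
Qed.

Lemma exp_le_linear K : 0 <= K <= 6 / 5 -> exp K <= 1 + 25 / 12 * K.
Proof.
  intros HK.
  assert (H := exp_le_chord K (6 / 5) HK ltac:(lra)).
  assert (H' := exp_6_5_le).
  assert (K * (exp (6 / 5) - 1) / (6 / 5) <= 25 / 12 * K) by (unfold Rdiv; nra).
  lra.
Qed.

Lemma is_derive_MVT (h h' : R -> R) a b : a < b ->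
  (forall c, a <= c <= b -> is_derive h c (h' c)) ->
  exists c, a < c < b /\ h b - h a = h' c * (b - a).
Proof.
  intros Hab Hd.
  destruct (MVT_cor2 h h' a b Hab) as (c & Hc & Hmid).
  { intros c Hc; apply is_derive_Reals, Hd, Hc. }
  exists c; split; assumption.
Qed.

Lemma is_derive_shift (h h' : R -> R) d t :
  is_derive h (t + d) (h' (t + d)) -> is_derive (fun u => h (u + d)) t (h' (t + d)).
Proof.
  intros Hd.
  assert (Hlin : is_derive (fun u : R => u + d) t 1) by (auto_derive; auto; ring).
  generalize (is_derive_comp h (fun u => u + d) t _ _ Hd Hlin).
  intros H; change (scal 1 (h' (t + d))) with (1 * h' (t + d)) in H.
  now rewrite Rmult_1_l in H.
Qed.

Definition Delta2 (h : R -> R) (t : R) : R := h (t + 2) - 2 * h (t + 1) + h t.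

Lemma Delta2_le (h h' h'' : R -> R) a K :
  (forall c, a <= c <= a + 2 -> is_derive h c (h' c)) ->
  (forall c, a <= c <= a + 2 -> is_derive h' c (h'' c)) ->
  (forall c, a <= c <= a + 2 -> h'' c <= K) ->
  Delta2 h a <= K.
Proof.
  (* g = h - K t^2/2 has g'' <= 0 and Delta2 g = Delta2 h - K. *)
  intros D1 D2 Hb.
  set (g := fun t => h t - K * t ^ 2 / 2).
  set (g' := fun t => h' t - K * t).
  assert (Dg : forall c, a <= c <= a + 2 -> is_derive g c (g' c)).
  { intros c Hc; apply (is_derive_minus h (fun t => K * t ^ 2 / 2)).
    - now apply D1.
    - auto_derive; auto; field. }
  destruct (is_derive_MVT g g' a (a + 1)) as (c1 & Hc1 & E1); [lra | intros; apply Dg; lra |].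
  destruct (is_derive_MVT g g' (a + 1) (a + 2)) as (c2 & Hc2 & E2); [lra | intros; apply Dg; lra |].
  destruct (is_derive_MVT g' (fun t => h'' t - K) c1 c2) as (d & Hd & E3); [lra | |].
  { intros c Hc; apply (is_derive_minus h' (fun t => K * t)).
    - apply D2; lra.
    - auto_derive; auto; ring. }
  assert (h'' d <= K) by (apply Hb; lra).
  unfold Delta2, g in *; nra.
Qed.

Lemma Delta2_succ_le (h h' h'' h''' : R -> R) a K :
  (forall c, a <= c <= a + 3 -> is_derive h c (h' c)) ->
  (forall c, a <= c <= a + 3 -> is_derive h' c (h'' c)) ->
  (forall c, a <= c <= a + 3 -> is_derive h'' c (h''' c)) ->
  (forall c, a <= c <= a + 3 -> h''' c <= K) ->
  Delta2 h (a + 1) <= Delta2 h a + K.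
Proof.
  (* Apply Delta2_le to the forward difference t |-> h (t + 1) - h t. *)
  intros D1 D2 D3 Hb.
  assert (Hdiff : forall k k' : R -> R,
    (forall c, a <= c <= a + 3 -> is_derive k c (k' c)) ->
    forall c, a <= c <= a + 2 ->
    is_derive (fun t => k (t + 1) - k t) c (k' (c + 1) - k' c)).
  { intros k k' Dk c Hc.
    apply (is_derive_minus (fun t => k (t + 1)) k).
    - apply is_derive_shift, Dk; lra.
    - apply Dk; lra. }
  assert (H := Delta2_le (fun t => h (t + 1) - h t) (fun t => h' (t + 1) - h' t)
                  (fun t => h'' (t + 1) - h'' t) a K
                  (Hdiff h h' D1) (Hdiff h' h'' D2)).
  enough (Delta2 (fun t => h (t + 1) - h t) a <= K).
  { unfold Delta2 in *.
    replace (a + 1 + 2) with (a + 2 + 1) by ring.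
    replace (a + 1 + 1) with (a + 2) in * by ring. lra. }
  apply H; intros c Hc.
  destruct (is_derive_MVT h'' h''' c (c + 1)) as (d & Hd & E); [lra | intros; apply D3; lra |].
  assert (h''' d <= K) by (apply Hb; lra).
  replace (c + 1 - c) with 1 in E by ring. lra.
Qed.

Definition Phi (m : R) : R :=
  PI * sqrt m + ln (PI * sqrt m - 1) - 3 * ln (PI * sqrt m).
Definition Phi' (m : R) : R := PI ^ 2 / (2 * (PI * sqrt m - 1)) - 3 / (2 * m).
Definition Phi'' (m : R) : R :=
  - PI ^ 3 / (4 * sqrt m * (PI * sqrt m - 1) ^ 2) + 3 / (2 * m ^ 2).
Definition Phi''' (m : R) : R :=
  PI ^ 3 * (3 * PI * sqrt m - 1) / (8 * sqrt m ^ 3 * (PI * sqrt m - 1) ^ 3) - 3 / m ^ 3.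

Lemma sqrt_ge_1_facts m : 1 <= m ->
  1 <= sqrt m /\ sqrt m * sqrt m = m /\ 2 <= PI * sqrt m - 1.
Proof.
  intros Hm.
  assert (Hs : 1 <= sqrt m) by (rewrite <- sqrt_1; apply sqrt_le_1_alt; lra).
  split; [exact Hs | split; [apply sqrt_sqrt; lra |]].
  generalize PI_gt_3; nra.
Qed.

Lemma is_derive_Phi m : 1 <= m -> is_derive Phi m (Phi' m).
Proof.
  intros Hm; destruct (sqrt_ge_1_facts m Hm) as (Hs & Hss & Hp).
  generalize PI_gt_3; intros HPI.
  unfold Phi, Phi'; auto_derive.
  - repeat split; nra.
  - set (s := sqrt m) in *; clearbody s; subst m; field; split; nra.
Qed.

Lemma is_derive_Phi' m : 1 <= m -> is_derive Phi' m (Phi'' m).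
Proof.
  intros Hm; destruct (sqrt_ge_1_facts m Hm) as (Hs & Hss & Hp).
  unfold Phi', Phi''; auto_derive.
  - repeat split; nra.
  - set (s := sqrt m) in *; clearbody s; subst m; field; split; nra.
Qed.

Lemma is_derive_Phi'' m : 1 <= m -> is_derive Phi'' m (Phi''' m).
Proof.
  intros Hm; destruct (sqrt_ge_1_facts m Hm) as (Hs & Hss & Hp).
  unfold Phi'', Phi'''; auto_derive.
  - repeat split; try lra; apply Rgt_not_eq; repeat apply Rmult_lt_0_compat; lra.
  - set (s := sqrt m) in *; clearbody s; subst m; field; split; nra.
Qed.

Lemma Phi''_nonpos m : 1 <= m -> Phi'' m <= 0.
Proof.
  intros Hm; destruct (sqrt_ge_1_facts m Hm) as (Hs & Hss & Hp).
  generalize PI_gt_3; intros HPI.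
  unfold Phi''; set (s := sqrt m) in *; clearbody s; subst m.
  set (p := PI * s) in *.
  (* with p = PI sqrt m: numerator 6 (p - 1)^2 - p^3 = -((p - 2)^3 + 2) *)
  replace (- PI ^ 3 / (4 * s * (p - 1) ^ 2) + 3 / (2 * (s * s) ^ 2))
    with (- (((p - 2) ^ 3 + 2) / (4 * s ^ 4 * (p - 1) ^ 2)))
    by (unfold p; field; split; nra).
  enough (0 <= ((p - 2) ^ 3 + 2) / (4 * s ^ 4 * (p - 1) ^ 2)) by lra.
  apply Rdiv_le_0_compat.
  - assert (0 <= (p - 2) ^ 3) by (apply pow_le; lra). lra.
  - assert (0 < s ^ 4) by (apply pow_lt; lra). nra.
Qed.

Lemma Phi'''_le m : 1 <= m -> Phi''' m <= 3 * PI / (8 * sqrt m ^ 5).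
Proof.
  intros Hm; destruct (sqrt_ge_1_facts m Hm) as (Hs & Hss & Hp).
  generalize PI_gt_3; intros HPI.
  unfold Phi'''; set (s := sqrt m) in *; clearbody s; subst m.
  set (p := PI * s) in *.
  assert (Hgap : 3 * PI / (8 * s ^ 5)
     - (PI ^ 3 * (3 * p - 1) / (8 * s ^ 3 * (p - 1) ^ 3) - 3 / (s * s) ^ 3)
     = (16 * p ^ 3 - 63 * p ^ 2 + 69 * p - 24) / (8 * s ^ 6 * (p - 1) ^ 3))
    by (unfold p; field; split; nra).
  replace (3 * PI * s) with (3 * p) by (unfold p; ring).
  enough (0 <= (16 * p ^ 3 - 63 * p ^ 2 + 69 * p - 24) / (8 * s ^ 6 * (p - 1) ^ 3)) by lra.
  apply Rdiv_le_0_compat.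
  - assert (0 <= (p - 3) ^ 3) by (apply pow_le; lra). nra.
  - assert (0 < s ^ 6) by (apply pow_lt; lra).
    assert (0 < (p - 1) ^ 3) by (apply pow_lt; lra). nra.
Qed.

Lemma Phi_Delta2_nonpos r : 1 <= r -> Delta2 Phi r <= 0.
Proof.
  intros Hr; apply (Delta2_le Phi Phi' Phi'').
  - intros c Hc; apply is_derive_Phi; lra.
  - intros c Hc; apply is_derive_Phi'; lra.
  - intros c Hc; apply Phi''_nonpos; lra.
Qed.

Lemma Phi_Delta2_succ_le r : 1 <= r ->
  Delta2 Phi (r + 1) <= Delta2 Phi r + 3 * PI / (8 * sqrt r ^ 5).
Proof.
  intros Hr; apply (Delta2_succ_le Phi Phi' Phi'' Phi''').
  - intros c Hc; apply is_derive_Phi; lra.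
  - intros c Hc; apply is_derive_Phi'; lra.
  - intros c Hc; apply is_derive_Phi''; lra.
  - intros c Hc; eapply Rle_trans; [apply Phi'''_le; lra |].
    assert (Hs : 1 <= sqrt r) by (apply sqrt_ge_1_facts; lra).
    assert (sqrt r <= sqrt c) by (apply sqrt_le_1_alt; lra).
    assert (sqrt r ^ 5 <= sqrt c ^ 5) by (apply pow_incr; lra).
    assert (1 <= sqrt r ^ 5) by (apply pow_R1_Rle; lra).
    generalize PI_gt_3; intros HPI.
    unfold Rdiv; apply Rmult_le_compat_l; [lra |].
    apply Rinv_le_contravar; lra.
Qed.

Lemma exp_third_difference_le r : 1 <= r ->
  exp (3 * PI / (8 * sqrt r ^ 5)) <= 1 + 850 * / (PI * sqrt r) ^ 5.
Proof.
  intros Hr; destruct (sqrt_ge_1_facts r Hr) as (Hs & _ & _).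
  assert (HPI := PI_gt_3); assert (HPI' := PI_lt_16_5).
  assert (Hs5 : 1 <= sqrt r ^ 5) by (apply pow_R1_Rle; lra).
  assert (HK : 3 * PI / (8 * sqrt r ^ 5) = 3 / 8 * PI ^ 6 * / (PI * sqrt r) ^ 5)
    by (field; lra).
  assert (Hu : 0 < / (PI * sqrt r) ^ 5) by (apply Rinv_0_lt_compat, pow_lt; nra).
  assert (HP6 : PI ^ 6 <= (16 / 5) ^ 6) by (apply pow_incr; lra).
  eapply Rle_trans; [apply exp_le_linear |].
  - split; [apply Rdiv_le_0_compat; lra |].
    apply (Rmult_le_reg_r (8 * sqrt r ^ 5)); [lra |].
    unfold Rdiv; rewrite Rmult_assoc, Rinv_l by lra; nra.
  - rewrite HK; nra.
Qed.

Definition amp (t : R) : R := exp t * (t - 1) / t ^ 3.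
Definition eps (t : R) : R := / (t ^ 4 * (t - 1)).

(* Since t^5 - t^4 - c = t^4 (t - 1) (1 - c eps t), f and g differ from amplitude ratios
   by [correction 1] and [correction (-1)] respectively. *)
Definition correction (c x y z : R) : R :=
  (1 - c * eps x) * (1 - c * eps z) / (1 + c * eps y) ^ 2.

Lemma quartic_factor_ge t : 3 <= t -> 162 <= t ^ 4 * (t - 1).
Proof.
  intros Ht.
  assert (81 <= t ^ 4) by (replace 81 with (3 ^ 4) by ring; apply pow_incr; lra).
  nra.
Qed.

Lemma eps_pos t : 3 <= t -> 0 < eps t.
Proof. intros Ht; apply Rinv_0_lt_compat; generalize (quartic_factor_ge t Ht); lra. Qed.

Lemma eps_lt_1 t : 3 <= t -> eps t < 1.
Proof.
  intros Ht; assert (Hq := quartic_factor_ge t Ht).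
  unfold eps; rewrite <- Rinv_1; apply Rinv_lt_contravar; lra.
Qed.

Lemma eps_antitone s t : 3 <= s <= t -> eps t <= eps s.
Proof.
  intros Hst; apply Rinv_le_contravar.
  - assert (0 < s ^ 4) by (apply pow_lt; lra). nra.
  - assert (s ^ 4 <= t ^ 4) by (apply pow_incr; lra).
    assert (0 < s ^ 4) by (apply pow_lt; lra). nra.
Qed.

Lemma eps_le t : 3 <= t -> eps t <= 3 / 2 * / t ^ 5.
Proof.
  intros Ht.
  assert (0 < t ^ 4) by (apply pow_lt; lra).
  unfold eps; replace (/ (t ^ 4 * (t - 1))) with (t / (t - 1) * / t ^ 5) by (field; lra).
  apply Rmult_le_compat_r; [left; apply Rinv_0_lt_compat, pow_lt; lra |].
  apply (Rmult_le_reg_r (t - 1)); [lra |].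
  unfold Rdiv; rewrite Rmult_assoc, Rinv_l by lra; lra.
Qed.

Lemma amplitude_split c x y z : -1 <= c <= 1 -> 3 <= x -> 3 <= y -> 3 <= z ->
  exp (x - 2 * y + z) * (y ^ 14 * (x ^ 5 - x ^ 4 - c) * (z ^ 5 - z ^ 4 - c)) /
    (x ^ 7 * z ^ 7 * (y ^ 5 - y ^ 4 + c) ^ 2) =
  amp x * amp z / amp y ^ 2 * correction c x y z.
Proof.
  intros Hc Hx Hy Hz.
  assert (Qx := quartic_factor_ge x Hx); assert (Qy := quartic_factor_ge y Hy).
  assert (Qz := quartic_factor_ge z Hz).
  assert (Ey := exp_pos y).
  rewrite exp_second_difference.
  unfold amp, correction, eps.
  field; repeat split; try apply Rgt_not_eq; try nra.
Qed.

Lemma exp_Phi m : 1 <= m -> exp (Phi m) = amp (PI * sqrt m).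
Proof.
  intros Hm; destruct (sqrt_ge_1_facts m Hm) as (Hs & _ & Hp).
  generalize PI_gt_3; intros HPI.
  unfold Phi, amp; set (x := PI * sqrt m) in *.
  replace (x + ln (x - 1) - 3 * ln x) with (x + ln (x - 1) + - (INR 3 * ln x)) by (simpl; ring).
  rewrite !exp_plus, exp_Ropp, exp_INR_mul, !exp_ln by nra.
  field; nra.
Qed.

Lemma correction_pos c x y z : -1 <= c <= 1 -> 3 <= x -> 3 <= y -> 3 <= z ->
  0 < correction c x y z.
Proof.
  intros Hc Hx Hy Hz.
  assert (factor_pos : forall t, 3 <= t -> 0 < 1 - c * eps t /\ 0 < 1 + c * eps t).
  { intros t Ht; assert (H0 := eps_pos t Ht); assert (H1 := eps_lt_1 t Ht); split; nra. }
  destruct (factor_pos x Hx) as [Px _]; destruct (factor_pos y Hy) as [_ Py].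
  destruct (factor_pos z Hz) as [Pz _].
  unfold correction; apply Rdiv_lt_0_compat; [nra | apply pow_lt; lra].
Qed.

Lemma inv_pow5_le t : 3 <= t -> 0 < / t ^ 5 <= 1 / 243.
Proof.
  intros Ht; split; [apply Rinv_0_lt_compat, pow_lt; lra |].
  assert (3 ^ 5 <= t ^ 5) by (apply pow_incr; lra).
  unfold Rdiv; rewrite Rmult_1_l; apply Rinv_le_contravar; lra.
Qed.

Lemma correction_ge x y z : 3 <= x <= y -> y <= z -> 1 - 7 * / x ^ 5 <= correction 1 x y z.
Proof.
  intros Hxy Hyz.
  destruct (inv_pow5_le x ltac:(lra)) as [Hu0 Hu1]; assert (He := eps_le x ltac:(lra)).
  assert (Hx0 := eps_pos x ltac:(lra)).
  assert (Hy0 := eps_pos y ltac:(lra)); assert (Hy1 := eps_antitone x y Hxy).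
  assert (Hz0 := eps_pos z ltac:(lra)); assert (Hz1 := eps_antitone x z ltac:(lra)).
  unfold correction; rewrite !Rmult_1_l.
  set (u := / x ^ 5) in *; set (e := eps x) in *.
  set (ey := eps y) in *; set (ez := eps z) in *.
  apply (Rmult_le_reg_r ((1 + ey) ^ 2)); [nra |].
  unfold Rdiv; rewrite Rmult_assoc, Rinv_l by nra; rewrite Rmult_1_r.
  assert ((1 - e) ^ 2 <= (1 - e) * (1 - ez)) by nra.
  assert ((1 + ey) ^ 2 <= (1 + e) ^ 2) by nra.
  assert ((1 - 7 * u) * (1 + e) ^ 2 <= (1 - e) ^ 2) by nra.
  nra.
Qed.

Lemma correction_le x y z w : 3 <= x <= y -> y <= z <= w ->
  correction (-1) y z w <= 1 + 7 * / x ^ 5.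
Proof.
  intros Hxy Hyw.
  destruct (inv_pow5_le x ltac:(lra)) as [Hu0 Hu1]; assert (He := eps_le x ltac:(lra)).
  assert (Hy0 := eps_pos y ltac:(lra)); assert (Hy1 := eps_antitone x y Hxy).
  assert (Hz0 := eps_pos z ltac:(lra)); assert (Hz1 := eps_antitone x z ltac:(lra)).
  assert (Hw0 := eps_pos w ltac:(lra)); assert (Hw1 := eps_antitone x w ltac:(lra)).
  unfold correction.
  replace (1 - -1 * eps y) with (1 + eps y) by ring.
  replace (1 - -1 * eps w) with (1 + eps w) by ring.
  replace (1 + -1 * eps z) with (1 - eps z) by ring.
  set (u := / x ^ 5) in *; set (e := eps x) in *.
  set (ey := eps y) in *; set (ez := eps z) in *; set (ew := eps w) in *.
  apply (Rmult_le_reg_r ((1 - ez) ^ 2)); [nra |].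
  unfold Rdiv; rewrite Rmult_assoc, Rinv_l by nra; rewrite Rmult_1_r.
  assert ((1 + ey) * (1 + ew) <= (1 + e) ^ 2) by nra.
  assert ((1 - e) ^ 2 <= (1 - ez) ^ 2) by nra.
  assert ((1 + e) ^ 2 <= (1 + 7 * u) * (1 - e) ^ 2) by nra.
  nra.
Qed.

Lemma mu_ge_3 k : (1 <= k)%nat -> 3 <= mu k.
Proof.
  intros Hk; apply le_INR in Hk.
  destruct (sqrt_ge_1_facts (INR k) Hk) as (_ & _ & Hp).
  unfold mu; lra.
Qed.

Lemma mu_le j k : (j <= k)%nat -> mu j <= mu k.
Proof.
  intros Hjk; unfold mu; apply Rmult_le_compat_l; [left; apply PI_RGT_0 |].
  apply sqrt_le_1_alt, le_INR, Hjk.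
Qed.

Lemma amp_mu_ratio n : (2 <= n)%nat ->
  amp (mu (n - 1)) * amp (mu (n + 1)) / amp (mu n) ^ 2 = exp (Delta2 Phi (INR (n - 1))).
Proof.
  intros Hn.
  assert (Hr : 1 <= INR (n - 1)) by (apply (le_INR 1); lia).
  assert (E1 : INR n = INR (n - 1) + 1) by (rewrite <- S_INR; f_equal; lia).
  assert (E2 : INR (n + 1) = INR (n - 1) + 2) by (rewrite plus_INR, E1; simpl; ring).
  unfold Delta2, mu; rewrite E1, E2.
  rewrite exp_second_difference, !exp_Phi by lra.
  now rewrite Rmult_comm.
Qed.

Lemma f_n_eq n : (2 <= n)%nat ->
  f_n n = exp (Delta2 Phi (INR (n - 1))) * correction 1 (mu (n - 1)) (mu n) (mu (n + 1)).
Proof.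
  intros Hn; unfold f_n; cbv zeta.
  rewrite amplitude_split by first [lra | apply mu_ge_3; lia].
  now rewrite amp_mu_ratio.
Qed.

Lemma g_n_eq n : (2 <= n)%nat ->
  g_n n = exp (Delta2 Phi (INR (n - 1))) * correction (-1) (mu (n - 1)) (mu n) (mu (n + 1)).
Proof.
  intros Hn; unfold g_n; cbv zeta.
  rewrite <- amp_mu_ratio, <- amplitude_split by first [lra | apply mu_ge_3; lia | exact Hn].
  set (x := mu (n - 1)); set (y := mu n); set (z := mu (n + 1)).
  replace (x ^ 5 - x ^ 4 + 1) with (x ^ 5 - x ^ 4 - -1) by ring.
  replace (z ^ 5 - z ^ 4 + 1) with (z ^ 5 - z ^ 4 - -1) by ring.
  replace (y ^ 5 - y ^ 4 - 1) with (y ^ 5 - y ^ 4 + -1) by ring.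
  reflexivity.
Qed.

Lemma final_combination A B E F G u :
  0 < A <= 1 -> 0 < B <= E * A -> 0 < G <= 1 + 7 * u -> 1 - 7 * u <= F ->
  E <= 1 + 850 * u -> 0 < u <= 1 / 243 ->
  B * G < A * F + 1000 * u.
Proof.
  (* B G - A F <= A ((1 + 850 u) (1 + 7 u) - (1 - 7 u)) <= (864 + 5950 u) u. *)
  intros HA HB HG HF HE Hu.
  assert (B * G <= E * A * (1 + 7 * u)) by nra.
  assert (E * A <= (1 + 850 * u) * A) by nra.
  nra.
Qed.

Theorem theorem3p2 : forall n : nat, (2 <= n)%nat ->
  g_n (n + 1) < f_n n + 1000 / (mu (n - 1)) ^ 5.
Proof.
  intros n Hn.
  rewrite (g_n_eq (n + 1)), (f_n_eq n) by lia.
  replace (n + 1 - 1)%nat with n by lia.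
  assert (Hr : 1 <= INR (n - 1)) by (apply (le_INR 1); lia).
  assert (E1 : INR n = INR (n - 1) + 1) by (rewrite <- S_INR; f_equal; lia).
  rewrite E1.
  assert (Hx : 3 <= mu (n - 1)) by (apply mu_ge_3; lia).
  apply final_combination with (E := exp (3 * PI / (8 * sqrt (INR (n - 1)) ^ 5))).
  - split; [apply exp_pos |].
    rewrite <- exp_0; apply exp_monotone, Phi_Delta2_nonpos, Hr.
  - split; [apply exp_pos |].
    rewrite <- exp_plus; apply exp_monotone.
    eapply Rle_trans; [apply Phi_Delta2_succ_le, Hr | lra].
  - split; [apply correction_pos; try lra; apply mu_ge_3; lia |].
    apply correction_le; split; try apply mu_le; first [exact Hx | lia].
  - apply correction_ge; try split; try apply mu_le; first [exact Hx | lia].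
  - apply exp_third_difference_le, Hr.
  - apply inv_pow5_le, Hx.
Qed.
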